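(* Let $\mathbf{d}=(d_1\ge d_2\ge\cdots\ge d_n)$ be a zero-free graphical degree sequence. Consider the following procedure applied to $\mathbf{d}$: (1) If $d_1\ge n-2$ or $d_n\ge\lfloor n/2\rfloor$, return True. (2) Otherwise, if $d_1=d_n$, return False. (3) Otherwise, let $s_u=\max\{s: s<n-d_{s+1}\}$. If there exists an integer $s$ with $d_1+1\le s\le s_u$ such that both $(d_1,\dots,d_s)$ and $(d_{s+1},\dots,d_n)$ are graphical, return False. (4) Otherwise, for each integer $l$ from $d_n+1$ to $\min\{\lfloor n/2\rfloor,\, n-d_1-1\}$: if $d_{n+1-l}<l$, let $m=\min\{i: d_i<l\}$; if moreover $l\le n-m$, then for every choice of $l$ indices from $\{m,m+1,\dots,n\}$, let $\mathbf{s_1}$ be the subsequence of $\mathbf{d}$ at these indices and $\mathbf{s_2}$ the subsequence of $\mathbf{d}$ at the remaining $n-l$ indices; if $\mathbf{s_1}$ and $\mathbf{s_2}$ both have even sum and are both graphical, return False. (5) If the procedure has not returned, return True. Then this procedure returns True if and only if $\mathbf{d}$ is forcibly connected.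
   Context: A graphical degree sequence of length $n$ is a non-increasing sequence of non-negative integers that is the vertex degree sequence of some simple graph (finite, undirected, no loops or multiple edges) on $n$ vertices; such a graph is a realization of the sequence. A finite sequence of non-negative integers is called graphical if, when sorted in non-increasing order, it is a graphical degree sequence. A sequence is zero-free if all its terms are positive. A graphical degree sequence is forcibly connected if every one of its realizations is a connected graph. *)

From mathcomp Require Import all_boot.
Set Implicit Arguments. Unset Strict Implicit. Unset Printing Implicit Defensive.

Definition simple_graph (n : nat) (e : rel 'I_n) : Prop :=
  (forall i j, e i j = e j i) /\ (forall i, ~~ e i i).

Definition deg (n : nat) (e : rel 'I_n) (i : 'I_n) : nat := #|[set j | e i j]|.

Definition realization (d : seq nat) (e : rel 'I_(size d)) : Prop :=
  simple_graph e /\ forall i : 'I_(size d), deg e i = nth 0 d i.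

Definition graphical_degree_seq (d : seq nat) : Prop :=
  sorted geq d /\ exists e : rel 'I_(size d), realization e.

Definition graphical (s : seq nat) : Prop := graphical_degree_seq (sort geq s).

Definition zero_free (d : seq nat) : bool := all (fun x => 0 < x) d.

Definition graph_connected (n : nat) (e : rel 'I_n) : Prop :=
  forall i j : 'I_n, connect e i j.

Definition forcibly_connected (d : seq nat) : Prop :=
  forall e : rel 'I_(size d), realization e -> graph_connected e.

(* 1-based access d_i *)
Definition D (d : seq nat) (i : nat) : nat := nth 0 d i.-1.

Definition s_u (d : seq nat) : nat :=
  \max_(s < size d | s < size d - D d s.+1) (s : nat).

Definition step1 (d : seq nat) : Prop :=
  size d - 2 <= D d 1 \/ (size d)./2 <= D d (size d).

Definition step3 (d : seq nat) : Prop :=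
  exists s, [/\ D d 1 + 1 <= s, s <= s_u d,
                graphical (take s d) & graphical (drop s d)].

(* m = min { i : d_i < l } (1-based) *)
Definition m_index (d : seq nat) (l : nat) : nat := (find (fun x => x < l) d).+1.

Definition subseq_at (d : seq nat) (I : {set 'I_(size d)}) : seq nat :=
  [seq nth 0 d (nat_of_ord i) | i <- enum I].

Definition step4 (d : seq nat) : Prop :=
  let n := size d in
  exists l, [/\ D d n + 1 <= l, l <= minn n./2 (n - D d 1 - 1),
     D d (n.+1 - l) < l,
     l <= n - m_index d l &
     exists I : {set 'I_n},
       [/\ #|I| = l,
           (forall i : 'I_n, i \in I -> m_index d l <= (i : nat).+1),
           ~~ odd (sumn (subseq_at I)) /\ ~~ odd (sumn (subseq_at (~: I))),
           graphical (subseq_at I) & graphical (subseq_at (~: I))]].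

Definition procedure_true (d : seq nat) : Prop :=
  step1 d \/ (~ step1 d /\ D d 1 <> D d (size d) /\ ~ step3 d /\ ~ step4 d).

From mathcomp Require Import all_boot zify.
Set Implicit Arguments. Unset Strict Implicit. Unset Printing Implicit Defensive.

(* A realization of d is disconnected exactly when its vertex set splits into
   two nonempty parts B and ~: B, each carrying a simple graph that realizes the
   degrees there.  Given such a split with l = |B| <= n/2, every degree in B is
   below l and every degree outside B is below n - l; as d is zero-free this
   rules out step (1), and it puts B inside the tail of indices i with d_i < l,
   which starts at m.  If B is that whole tail, step (3) succeeds with s = m - 1;
   otherwise step (4) succeeds with l and the index set B.  Conversely, steps (3)
   and (4) exhibit such a split, and when d is constant equal to k with
   2k + 2 <= n, k-regular circulant graphs on k + 1 and on n - k - 1 vertices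
   side by side form a disconnected realization. *)

Definition realizable_on (V : finType) (A : {set V}) (f : V -> nat) : Prop :=
  exists e : rel V, [/\ symmetric e, irreflexive e,
    (forall x y, e x y -> x \in A) & {in A, forall x, #|[set y | e x y]| = f x}].

Lemma realizable_on_deg_lt (V : finType) (A : {set V}) f x :
  realizable_on A f -> x \in A -> f x < #|A|.
Proof.
move=> [e [sym irr inA degA]] xA.
rewrite -(degA _ xA) (cardsD1 x A) xA add1n ltnS.
apply: subset_leq_card; apply/subsetP => y; rewrite !inE => exy.
rewrite (inA y x) ?andbT; last by rewrite sym.
by apply: contraTneq exy => ->; rewrite irr.
Qed.

Lemma realizable_on_imset (W V : finType) (h : W -> V) (B : {set W}) f g :
  injective h -> {in B, forall x, g x = f (h x)} ->
  realizable_on B g <-> realizable_on (h @: B) f.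
Proof.
move=> h_inj gE; split=> [[e [sym irr inB degB]] | [e [sym irr inhB degE]]].
- pose e' x y := [exists u, exists w, [&& h u == x, h w == y & e u w]].
  have e'E u w : e' (h u) (h w) = e u w.
    apply/existsP/idP => [[u' /existsP [w' /and3P [/eqP/h_inj -> /eqP/h_inj ->]]] //|].
    by exists u; apply/existsP; exists w; rewrite !eqxx.
  have e'_im x y : e' x y -> exists u w, [/\ x = h u, y = h w & e u w].
    by case/existsP=> u /existsP [w /and3P [/eqP <- /eqP <- euw]]; exists u, w.
  exists e'; split.
  + by move=> x y; apply/idP/idP => /e'_im [u [w [-> -> euw]]]; rewrite e'E sym.
  + by move=> x; apply/negbTE/negP => /e'_im [u [w [-> /h_inj <-]]]; rewrite irr.
  + by move=> x y /e'_im [u [w [-> _ /inB uB]]]; rewrite imset_f.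
  + move=> _ /imsetP [u uB ->].
    have -> : [set y | e' (h u) y] = h @: [set w | e u w].
      apply/setP=> y; rewrite inE; apply/idP/imsetP => [/e'_im [u' [w [/h_inj <- -> euw]]]|[w]].
        by exists w; rewrite ?inE.
      by rewrite inE => euw ->; rewrite e'E.
    by rewrite card_imset // degB // gE.
- exists (fun u w => e (h u) (h w)); split.
  + by move=> u w; rewrite sym.
  + by move=> u; rewrite irr.
  + by move=> u w /inhB; rewrite mem_imset.
  + move=> u uB; rewrite gE // -degE ?imset_f // -(card_imset _ h_inj).
    apply: eq_card => y; rewrite inE.
    apply/imsetP/idP => [[w] /[!inE] ehw -> // | ehy].
    have /imsetP [w _ yE] : y \in h @: B by apply: (inhB y (h u)); rewrite sym.
    by exists w; rewrite // inE -yE.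
Qed.

Lemma realizable_on_join (V : finType) (A : {set V}) f :
  realizable_on A f -> realizable_on (~: A) f ->
  exists e : rel V, [/\ symmetric e, irreflexive e,
    forall x, #|[set y | e x y]| = f x & closed e A].
Proof.
move=> [e1 [sym1 irr1 in1 deg1]] [e2 [sym2 irr2 in2 deg2]].
have in1' x y : e1 x y -> y \in A by rewrite sym1; apply: in1.
have in2' x y : e2 x y -> y \in ~: A by rewrite sym2; apply: in2.
exists (fun x y => e1 x y || e2 x y); split.
- by move=> x y; rewrite sym1 sym2.
- by move=> x; rewrite irr1 irr2.
- move=> x; have [xA | xNA] := boolP (x \in A).
  + rewrite -(deg1 x xA); apply: eq_card => y; rewrite !inE.
    by case e2xy: (e2 x y); rewrite ?orbF //; move: (in2 _ _ e2xy); rewrite inE xA.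
  + rewrite -deg2 ?inE //; apply: eq_card => y; rewrite !inE.
    by case e1xy: (e1 x y) => //=; move: (in1 _ _ e1xy); rewrite (negbTE xNA).
- move=> x y /orP [/[dup] /in1 -> /in1' -> // | /[dup] /in2 + /in2'].
  by rewrite !inE => /negbTE -> /negbTE ->.
Qed.

Lemma realizable_on_closed (V : finType) (e : rel V) (A : {set V}) f :
  symmetric e -> irreflexive e -> (forall x, #|[set y | e x y]| = f x) ->
  closed e A -> realizable_on A f.
Proof.
move=> sym irr degE clA.
exists (fun x y => e x y && (x \in A)); split.
- by move=> x y; rewrite sym; case: (boolP (e y x)) => //= /clA ->.
- by move=> x; rewrite irr.
- by move=> x y /andP [].
- by move=> x xA; rewrite -degE; apply: eq_card => y; rewrite !inE xA andbT.
Qed.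

Lemma realizable_on_sum_even n (A : {set 'I_n}) f :
  realizable_on A f -> ~~ odd (\sum_(x in A) f x).
Proof.
move=> [e [sym irr inA degA]].
have -> : \sum_(x in A) f x = \sum_x \sum_y (e x y : nat).
  rewrite big_mkcond; apply: eq_bigr => x _.
  rewrite -big_mkcond /= sum1dep_card.
  case: (boolP (x \in A)) => xA; first by rewrite degA.
  apply/esym/eqP; rewrite cards_eq0; apply/eqP/setP=> y; rewrite !inE.
  by apply/negP=> /inA; rewrite (negbTE xA).
have -> : \sum_x \sum_y (e x y : nat) =
          \sum_x \sum_y ((e x y && (x < y)) : nat) + \sum_x \sum_y ((e x y && (y < x)) : nat).
  rewrite -big_split; apply: eq_bigr => x _; rewrite -big_split; apply: eq_bigr => y _ /=.
  case: (boolP (e x y)) => //= exy.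
  have : x != y by apply: contraTneq exy => ->; rewrite irr.
  rewrite -val_eqE /=; lia.
rewrite [X in _ + X]exchange_big /=.
under [X in _ + X]eq_bigr => y _ do under eq_bigr => x _ do rewrite sym.
by rewrite addnn odd_double.
Qed.

Lemma realization_realizable_on (s : seq nat) :
  (exists e : rel 'I_(size s), realization e) <->
  realizable_on [set: 'I_(size s)] (fun i => nth 0 s i).
Proof.
split=> [[e [[sym irr] degE]] | [e [sym irr _ degE]]].
- exists e; split=> [//| x | x y _ | x _]; [exact: negbTE | by rewrite inE | exact: degE].
- exists e; split; first by split=> // x; rewrite irr.
  by move=> i; rewrite /deg degE ?inE.
Qed.

Lemma realizable_on_perm (t u : seq nat) : perm_eq t u ->
  realizable_on [set: 'I_(size t)] (fun i => nth 0 t i) <->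
  realizable_on [set: 'I_(size u)] (fun i => nth 0 u i).
Proof.
move=> tu; have sizeE := perm_size tu; case/(perm_iotaP 0): tu => Is Is_perm tE.
have Is_uniq : uniq Is by rewrite (perm_uniq Is_perm) iota_uniq.
have Is_size : size Is = size t by rewrite tE size_map.
have Is_lt (i : 'I_(size t)) : nth 0 Is i < size u.
  have : nth 0 Is i \in Is by apply: mem_nth; rewrite Is_size.
  by rewrite (perm_mem Is_perm) mem_iota.
pose h i := Ordinal (Is_lt i).
have h_inj : injective h.
  move=> i j /(congr1 val) /= /eqP; rewrite nth_uniq ?Is_size // => /eqP ij.
  exact: val_inj.
have h_onto : h @: [set: 'I_(size t)] = [set: 'I_(size u)].
  apply/eqP; rewrite eqEcard subsetT (card_imset _ h_inj) !cardsT !card_ord.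
  by rewrite sizeE leqnn.
rewrite -h_onto; apply: realizable_on_imset => // i _.
by move: (congr1 (nth 0 ^~ i) tE) => /= ->; rewrite (nth_map 0) // Is_size.
Qed.

Lemma graphicalE (t : seq nat) :
  graphical t <-> realizable_on [set: 'I_(size t)] (fun i => nth 0 t i).
Proof.
have sort_sorted_geq : sorted geq (sort geq t).
  by apply: sort_sorted => x y; exact: leq_total.
rewrite (realizable_on_perm (u := sort geq t)); last by rewrite perm_sym perm_sort.
by rewrite -realization_realizable_on /graphical /graphical_degree_seq; tauto.
Qed.

Lemma graphical_reindex (t : seq nat) (V : finType) (A : {set V}) (f : V -> nat)
    (h : 'I_(size t) -> V) :
  injective h -> h @: setT = A -> (forall k : 'I_(size t), nth 0 t k = f (h k)) ->
  graphical t <-> realizable_on A f.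
Proof.
by move=> h_inj <- tE; rewrite graphicalE; apply: realizable_on_imset => // k _.
Qed.

Definition shift_ord n a N (aN : a + N <= n) (k : 'I_N) : 'I_n :=
  widen_ord aN (rshift a k).

Lemma shift_ord_inj n a N (aN : a + N <= n) : injective (shift_ord aN).
Proof. by move=> i j /(congr1 val) /= ij; apply: val_inj => /=; lia. Qed.

Lemma imset_shift_ord n a N (aN : a + N <= n) :
  shift_ord aN @: [set: 'I_N] = [set i : 'I_n | a <= i < a + N].
Proof.
apply/setP=> i; rewrite inE; apply/imsetP/idP => [[k _ ->] /= | /andP [ai iaN]].
  by rewrite leq_addr ltn_add2l ltn_ord.
have kP : i - a < N by lia.
by exists (Ordinal kP) => //; apply: val_inj => /=; lia.
Qed.

Lemma graphical_take (d : seq nat) s : s <= size d ->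
  graphical (take s d) <-> realizable_on [set i : 'I_(size d) | i < s] (fun i => nth 0 d i).
Proof.
move=> sd; have sdE : 0 + size (take s d) <= size d by rewrite size_takel.
apply: (graphical_reindex (@shift_ord_inj _ _ _ sdE)) => [|k].
  by rewrite imset_shift_ord; apply/setP => i; rewrite !inE size_takel.
by rewrite nth_take //= (leq_trans (ltn_ord k)) ?size_take_min ?geq_minl.
Qed.

Lemma graphical_drop (d : seq nat) s : s <= size d ->
  graphical (drop s d) <-> realizable_on [set i : 'I_(size d) | s <= i] (fun i => nth 0 d i).
Proof.
move=> sd; have sdE : s + size (drop s d) <= size d by rewrite size_drop; lia.
apply: (graphical_reindex (@shift_ord_inj _ _ _ sdE)) => [|k].
  by rewrite imset_shift_ord; apply/setP => i; rewrite !inE size_drop; have := ltn_ord i; lia.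
by rewrite nth_drop.
Qed.

Lemma graphical_subseq_at (d : seq nat) (I : {set 'I_(size d)}) :
  graphical (subseq_at I) <-> realizable_on I (fun i => nth 0 d i).
Proof.
have sizeE : size (subseq_at I) = #|I| by rewrite size_map cardE.
pose h k := enum_val (cast_ord sizeE k).
have h_inj : injective h by move=> i j /enum_val_inj /cast_ord_inj.
apply: (graphical_reindex h_inj) => [|k].
  apply/eqP; rewrite eqEcard (card_imset _ h_inj) cardsT card_ord -sizeE leqnn andbT.
  by apply/subsetP => _ /imsetP [k _ ->]; exact: enum_valP.
rewrite /subseq_at (nth_map (h k)); last by rewrite -cardE -sizeE.
by rewrite -(enum_val_nth (h k) (cast_ord sizeE k)).
Qed.

Lemma card_ord_count N (P : pred nat) : #|[set i : 'I_N | P i]| = count P (iota 0 N).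
Proof.
by rewrite -sum1dep_card -(big_mkord P (fun _ => 1)) /index_iota subn0 sum1_count.
Qed.

Lemma count_iota_interval a b N :
  count (fun r => a <= r < b) (iota 0 N) = minn b N - minn a N.
Proof.
elim: N => [|N IH]; first by rewrite /= !minn0.
by rewrite -addn1 iotaD count_cat IH /=; lia.
Qed.

Lemma card_ord_ge n a : #|[set i : 'I_n | a <= i]| = n - a.
Proof.
have -> : [set i : 'I_n | a <= i] = [set i : 'I_n | a <= i < n].
  by apply/setP => i; rewrite !inE ltn_ord andbT.
by rewrite (card_ord_count _ (fun r => a <= r < n)) count_iota_interval; lia.
Qed.

(* The connection set {+-1, ..., +-k/2}, together with N/2 when k is odd (and
   then N is even), of a k-regular circulant graph on 'I_N. *)
Definition cyc_dist N (i j : nat) : nat := if i <= j then j - i else j + N - i.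

Definition circulant_offset N k r : bool :=
  (0 < r <= k./2) || (N - k./2 <= r < N) || odd k && (r.*2 == N).

Lemma card_circulant_offsets N k : k < N -> ~~ odd (N * k) ->
  #|[set r : 'I_N | circulant_offset N k r]| = k.
Proof.
move=> kN even_Nk; have k_half := odd_double_half k.
have N_even : odd k -> N = N./2.*2.
  move=> odd_k; move: even_Nk; rewrite oddM odd_k andbT => /negbTE odd_N.
  by have := odd_double_half N; rewrite odd_N.
pose I1 r := 1 <= r < k./2.+1.
pose I2 r := N - k./2 <= r < N.
pose I3 r := odd k && (N./2 <= r < N./2.+1).
have count0 (p : pred nat) : (forall r, p r = false) -> count p (iota 0 N) = 0.
  by move=> p0; apply/eqP; rewrite -leqn0 leqNgt -has_count; apply/hasP => -[r _]; rewrite p0.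
rewrite card_ord_count.
have -> : count (circulant_offset N k) (iota 0 N) = count (predU (predU I1 I2) I3) (iota 0 N).
  apply: eq_count => r; rewrite /circulant_offset /I1 /I2 /I3 /=.
  by case odd_k: (odd k) => /=; [have := N_even odd_k|]; lia.
have := count_predUI (predU I1 I2) I3 (iota 0 N).
rewrite [count (predI _ _) _]count0; last first.
  by move=> r; rewrite /I1 /I2 /I3 /=; case odd_k: (odd k); [have := N_even odd_k|]; lia.
have := count_predUI I1 I2 (iota 0 N).
rewrite [count (predI _ _) _]count0; last by move=> r; rewrite /I1 /I2 /=; lia.
have -> : count I3 (iota 0 N) = odd k.
  rewrite /I3; case odd_k: (odd k) => /=; last by rewrite count0.
  by rewrite count_iota_interval; have := N_even odd_k; lia.
rewrite /I1 /I2 !count_iota_interval; lia.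
Qed.

Lemma regular_realizable N k : k < N -> ~~ odd (N * k) ->
  realizable_on [set: 'I_N] (fun _ => k).
Proof.
move=> kN even_Nk.
exists (fun i j : 'I_N => circulant_offset N k (cyc_dist N i j)); split.
- move=> i j; have := ltn_ord i; have := ltn_ord j; rewrite /circulant_offset /cyc_dist.
  by case: (odd k) => /=; case: (leqP i j) => ?; case: (leqP j i) => ?; lia.
- move=> i; have := ltn_ord i; have := odd_double_half k.
  by rewrite /circulant_offset /cyc_dist leqnn subnn; lia.
- by move=> x y; rewrite inE.
- move=> i _.
  have dist_lt (j : 'I_N) : cyc_dist N i j < N.
    by rewrite /cyc_dist; case: (leqP i j); have := ltn_ord i; have := ltn_ord j; lia.
  pose g j := Ordinal (dist_lt j).
  have g_inj : injective g.
    move=> j1 j2 /(congr1 val) /=; rewrite /cyc_dist => dE; apply: val_inj => /=.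
    move: dE; have := ltn_ord i; have := ltn_ord j1; have := ltn_ord j2.
    by case: (leqP i j1) => ?; case: (leqP i j2) => ?; lia.
  have -> : [set j : 'I_N | circulant_offset N k (cyc_dist N i j)] =
            g @^-1: [set r : 'I_N | circulant_offset N k r].
    by apply/setP => j; rewrite !inE.
  by rewrite card_preimset // card_circulant_offsets.
Qed.

Definition realizable_split (d : seq nat) : Prop :=
  exists A : {set 'I_(size d)}, [/\ 0 < #|A|, 0 < #|~: A|,
    realizable_on A (fun i => nth 0 d i) & realizable_on (~: A) (fun i => nth 0 d i)].

Lemma forcibly_connectedP (d : seq nat) : forcibly_connected d <-> ~ realizable_split d.
Proof.
split=> [fc [A [/card_gt0P [x xA] /card_gt0P [y yNA] rA rNA]] | nsplit e [[sym irr] degE] i j].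
- have [e [sym irr degE clA]] := realizable_on_join rA rNA.
  have /(closed_connect clA) : connect e x y.
    by apply: (fc e); split=> //; split=> // z; rewrite irr.
  by rewrite xA; move: yNA; rewrite inE => /negbTE ->.
- apply/negPn/negP => nij; apply: nsplit.
  pose A := [set z | connect e i z].
  have clA : closed e A.
    by move=> x y exy; rewrite !inE; exact: (connect_closed (sym_connect_sym sym) i exy).
  have clNA : closed e (~: A) by move=> x y /clA; rewrite !inE => ->.
  have irr' : irreflexive e by move=> x; exact: negbTE.
  exists A; split.
  + by apply/card_gt0P; exists i; rewrite inE connect0.
  + by apply/card_gt0P; exists j; rewrite !inE.
  + exact: realizable_on_closed sym irr' degE clA.
  + exact: realizable_on_closed sym irr' degE clNA.
Qed.

Lemma sorted_geq_nth (d : seq nat) i j :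
  sorted geq d -> i <= j -> j < size d -> nth 0 d j <= nth 0 d i.
Proof.
move=> d_sorted ij jd.
have geq_trans : transitive geq by move=> x y z yx zy; apply: leq_trans zy yx.
by apply: (sorted_leq_nth geq_trans leqnn 0 d_sorted); rewrite ?inE //; apply: leq_ltn_trans jd.
Qed.

Lemma s_u_le (d : seq nat) : s_u d <= (size d).-1.
Proof. by apply/bigmax_leqP => i _; have := ltn_ord i; lia. Qed.

Lemma m_index_le (d : seq nat) l i : nth 0 d i < l -> m_index d l <= i.+1.
Proof. by move=> dil; rewrite ltnS leqNgt; apply/negP => /(before_find 0) /=; rewrite dil. Qed.

Lemma sumn_subseq_at (d : seq nat) (I : {set 'I_(size d)}) :
  sumn (subseq_at I) = \sum_(i in I) nth 0 d i.
Proof. by rewrite sumnE /subseq_at big_map big_enum. Qed.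

Lemma step3_realizable_split (d : seq nat) : step3 d -> realizable_split d.
Proof.
move=> [s [d1s s_su take_gr drop_gr]].
have sd : s < size d by have := s_u_le d; lia.
have s_gt0 : 0 < s by lia.
exists [set i : 'I_(size d) | s <= i].
rewrite (_ : ~: _ = [set i : 'I_(size d) | i < s]); last by apply/setP => i; rewrite !inE -ltnNge.
split; rewrite -?graphical_take -?graphical_drop ?(ltnW sd) //.
- by apply/card_gt0P; exists (Ordinal sd); rewrite inE.
- by apply/card_gt0P; exists (Ordinal (ltn_trans s_gt0 sd)); rewrite inE.
Qed.

Lemma step4_realizable_split (d : seq nat) : step4 d -> realizable_split d.
Proof.
move=> [l [dn_l l_le _ _ [I [cardI _ _ gI gNI]]]].
exists I; split; rewrite -?graphical_subseq_at // ?cardI; first by lia.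
by have := cardsC I; rewrite card_ord cardI; lia.
Qed.

Section SplitSteps.

Variables (d : seq nat) (B : {set 'I_(size d)}).
Let l := #|B|.
Hypotheses (d_sorted : sorted geq d)
  (rB : realizable_on B (fun i => nth 0 d i))
  (rNB : realizable_on (~: B) (fun i => nth 0 d i))
  (l_gt0 : 0 < l) (l_small : l.*2 <= size d).

Lemma split_deg_lt i : i \in B -> nth 0 d i < l.
Proof. exact: realizable_on_deg_lt rB. Qed.

Lemma split_compl_deg_lt i : i \in ~: B -> nth 0 d i < size d - l.
Proof. by move=> /(realizable_on_deg_lt rNB); rewrite cardsCs setCK card_ord. Qed.

Lemma split_card_le : l <= size d - (m_index d l).-1.
Proof.
rewrite -card_ord_ge; apply: subset_leq_card; apply/subsetP => i iB.
by rewrite inE; have := m_index_le (split_deg_lt iB); lia.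
Qed.

Lemma split_nth_m_index : nth 0 d (m_index d l).-1 < l.
Proof.
case/card_gt0P: l_gt0 => i iB.
apply: (@nth_find _ 0 (fun x => x < l)); apply/(has_nthP 0).
by exists i; [exact: ltn_ord | exact: split_deg_lt].
Qed.

Lemma split_first_lt : D d 1 < size d - l.
Proof.
case/card_gt0P: l_gt0 => i _; have n_gt0 : 0 < size d by apply: leq_ltn_trans (ltn_ord i).
have [oB | oNB] := boolP (Ordinal n_gt0 \in B).
  by have := split_deg_lt oB; rewrite /D /=; lia.
by apply: (split_compl_deg_lt (i := Ordinal n_gt0)); rewrite inE.
Qed.

Lemma split_last_lt : D d (size d) < l.
Proof.
case/card_gt0P: l_gt0 => i iB; apply: leq_ltn_trans (split_deg_lt iB).
by apply: sorted_geq_nth; have := ltn_ord i; lia.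
Qed.

Lemma split_not_step1 : zero_free d -> ~ step1 d.
Proof.
move=> /(all_nthP 0) d_pos; case/card_gt0P: l_gt0 => i iB.
have := d_pos i (ltn_ord i); have := split_deg_lt iB.
have := split_first_lt; have := split_last_lt.
by rewrite /step1 leq_half_double; lia.
Qed.

Lemma split_step4 : l < size d - (m_index d l).-1 -> step4 d.
Proof.
move=> l_lt; have nth_lt := split_nth_m_index.
exists l; split.
- by have := split_last_lt; lia.
- rewrite leq_min geq_half_double l_small /=; have := split_first_lt; lia.
- rewrite /D; apply: leq_ltn_trans nth_lt; apply: sorted_geq_nth; lia.
- lia.
- exists B; split => //.
  + by move=> i iB; apply: m_index_le (split_deg_lt iB).
  + by rewrite !sumn_subseq_at; split; apply: realizable_on_sum_even.
  + exact/graphical_subseq_at.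
  + exact/graphical_subseq_at.
Qed.

Lemma split_step3 : size d - (m_index d l).-1 <= l -> step3 d.
Proof.
set m := (m_index d l).-1 => l_ge.
have m_lt : m < size d by have := split_card_le; lia.
have BE : B = [set i : 'I_(size d) | m <= i].
  apply/eqP; rewrite eqEcard card_ord_ge -/l l_ge andbT.
  apply/subsetP => i iB; rewrite inE.
  by have := m_index_le (split_deg_lt iB); rewrite -/m; lia.
exists m; split.
- by have := split_first_lt; lia.
- apply: (@leq_bigmax_cond _ _ _ (Ordinal m_lt)); rewrite /D /=.
  by have := split_nth_m_index; have := split_card_le; rewrite -/m; lia.
- apply/graphical_take; first exact: ltnW.
  rewrite (_ : [set i : 'I_(size d) | i < m] = ~: B) // BE.
  by apply/setP => i; rewrite !inE -ltnNge.
- by apply/graphical_drop; [exact: ltnW | rewrite -BE].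
Qed.

Lemma split_steps34 : step3 d \/ step4 d.
Proof.
by case: (leqP (size d - (m_index d l).-1) l) => [/split_step3|/split_step4]; [left|right].
Qed.

End SplitSteps.

Lemma realizable_split_small (d : seq nat) : realizable_split d ->
  exists B : {set 'I_(size d)}, [/\ realizable_on B (fun i => nth 0 d i),
    realizable_on (~: B) (fun i => nth 0 d i), 0 < #|B| & #|B|.*2 <= size d].
Proof.
move=> [A [A_gt0 NA_gt0 rA rNA]].
have cardA := cardsC A; rewrite card_ord in cardA.
have [A_small | A_big] := leqP #|A|.*2 (size d); first by exists A.
by exists (~: A); rewrite setCK; split=> //; lia.
Qed.

Lemma constant_realizable_split (d : seq nat) :
  graphical_degree_seq d -> ~ step1 d -> D d 1 = D d (size d) -> realizable_split d.
Proof.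
move=> [d_sorted /realization_realizable_on rd] not1 d1n.
have [n0 | n_gt0] := posnP (size d); first by case: not1; left; rewrite n0.
set k := D d 1.
have dk (i : 'I_(size d)) : nth 0 d i = k.
  apply/eqP; rewrite eqn_leq sorted_geq_nth //= /k d1n.
  by apply: sorted_geq_nth; have := ltn_ord i; lia.
have k_half : k.*2.+2 <= size d.
  by move: not1; rewrite /step1 -d1n -/k; have := odd_double_half (size d); lia.
have even_nk : ~~ odd (size d * k).
  have := realizable_on_sum_even rd.
  by rewrite (eq_bigr (fun _ => k)) ?sum_nat_const ?cardsT ?card_ord // => i _.
have block a N : a + N <= size d -> k < N -> ~~ odd (N * k) ->
    realizable_on [set i : 'I_(size d) | a <= i < a + N] (fun i => nth 0 d i).
  move=> aN kN even_Nk; rewrite -imset_shift_ord.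
  rewrite -(realizable_on_imset (g := fun _ => k) (@shift_ord_inj _ _ _ aN)) => [|i _].
    exact: regular_realizable.
  by rewrite dk.
have last_lt : (size d).-1 < size d by lia.
exists [set i : 'I_(size d) | 0 <= i < 0 + k.+1].
rewrite (_ : ~: _ = [set i : 'I_(size d) | k.+1 <= i < k.+1 + (size d - k.+1)]); last first.
  by apply/setP => i; rewrite !inE; have := ltn_ord i; lia.
split.
- by apply/card_gt0P; exists (Ordinal n_gt0); rewrite inE.
- by apply/card_gt0P; exists (Ordinal last_lt); rewrite inE /=; lia.
- by apply: block; rewrite ?oddM ?oddS ?andNb //; lia.
- apply: block; try lia.
  move: even_nk; rewrite !oddM oddB ?oddS; last by lia.
  by case: (odd k); case: (odd (size d)).
Qed.

Theorem mainTheorem1 (d : seq nat) :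
  graphical_degree_seq d -> zero_free d ->
  (procedure_true d <-> forcibly_connected d).
Proof.
move=> d_gr d_pos; have d_sorted := proj1 d_gr.
rewrite forcibly_connectedP; split.
- move=> procedure /realizable_split_small [B [rB rNB B_gt0 B_small]].
  case: procedure => [|[_ [_ [not3 not4]]]].
    exact: split_not_step1 d_sorted rB rNB B_gt0 B_small d_pos.
  by case: (split_steps34 d_sorted rB rNB B_gt0 B_small).
- move=> no_split.
  have [step1_d | not1] := boolP ((size d - 2 <= D d 1) || ((size d)./2 <= D d (size d))).
    by left; apply/orP.
  have {}not1 : ~ step1 d by move/orP; apply/negP.
  right; split=> //; split; [|split].
  + by move=> d1n; apply: no_split; apply: constant_realizable_split.
  + by move=> s3; apply: no_split; apply: step3_realizable_split.
  + by move=> s4; apply: no_split; apply: step4_realizable_split.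
Qed.
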